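(* Let $L$ be a Latin square of order $n$ and let $\sigma=(\alpha,\beta,\gamma;(123))$ be an autoparatopism of $L$. Suppose $(i,j,k)\in O(L)$, and let $a=o_{\alpha\beta\gamma}(i)$, $b=o_{\beta\gamma\alpha}(j)$ and $c=o_{\gamma\alpha\beta}(k)$. Then $$\operatorname{lcm}(a,b)=\operatorname{lcm}(a,c)=\operatorname{lcm}(b,c)=\operatorname{lcm}(a,b,c).$$
   Context: A Latin square $L$ of order $n$ is an $n\times n$ array with rows, columns and symbols indexed by $[n]$, in which each symbol occurs exactly once in each row and each column. Its set of triples is $O(L)=\{(i,j,L(i,j))\}$. Permutations act on the right and are composed left to right. A paratopism $\sigma=(\alpha,\beta,\gamma;\delta)$, with $\alpha,\beta,\gamma\in\mathcal S_n$ and $\delta\in\mathcal S_3$, maps $L$ to $L^\sigma$ by replacing each triple $(x,y,z)$ with $(x\alpha,y\beta,z\gamma)$ and then permuting coordinates according to $\delta$. For $\delta=(123)$ the triple $(x,y,z)$ maps to $(z\gamma,x\alpha,y\beta)$. $\sigma$ is an autoparatopism of $L$ if $L^\sigma=L$. $o_\pi(i)$ is the length of the cycle of $\pi$ containing $i$, with fixed points counting as cycles of length $1$. *)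

From mathcomp Require Import all_boot all_fingroup.
Set Implicit Arguments. Unset Strict Implicit. Unset Printing Implicit Defensive.

Definition latin_square (n : nat) (L : 'I_n -> 'I_n -> 'I_n) : Prop :=
  (forall (i k : 'I_n), exists! j : 'I_n, L i j = k) /\
  (forall (j k : 'I_n), exists! i : 'I_n, L i j = k).

Definition triples (n : nat) (L : 'I_n -> 'I_n -> 'I_n) : {set 'I_n * 'I_n * 'I_n} :=
  [set t : 'I_n * 'I_n * 'I_n | t.2 == L t.1.1 t.1.2].

Definition para123 (n : nat) (alpha beta gamma : {perm 'I_n})
  (T : {set 'I_n * 'I_n * 'I_n}) : {set 'I_n * 'I_n * 'I_n} :=
  [set (gamma t.2, alpha t.1.1, beta t.1.2) | t in T].

Definition autoparatopism123 (n : nat) (L : 'I_n -> 'I_n -> 'I_n)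
  (alpha beta gamma : {perm 'I_n}) : Prop :=
  para123 alpha beta gamma (triples L) = triples L.

Definition cyc_len (n : nat) (pi : {perm 'I_n}) (i : 'I_n) : nat := #|porbit pi i|.

From mathcomp Require Import all_boot all_fingroup cyclic.
Set Implicit Arguments. Unset Strict Implicit. Unset Printing Implicit Defensive.

(* Applying the autoparatopism three times sends a triple (i, j, k) of L to
   (i alpha beta gamma, j beta gamma alpha, k gamma alpha beta); hence the images of
   i, j, k under the m-th powers of these permutations again form a triple.  If m is a
   common multiple of two of the cycle lengths a, b, c, two coordinates of that triple
   are fixed, and since two coordinates of a triple of a Latin square determine the
   third, so is the remaining one: each of a, b, c divides the lcm of the other two. *)

Local Open Scope group_scope.

(* The orbit of x has the size of the cyclic group <[s]> modulo the stabiliser of x. *)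
Lemma card_porbit_dvdn (T : finType) (s : {perm T}) x m :
  (#|porbit s x| %| m)%N = ((s ^+ m) x == x).
Proof.
pose H := 'C_<[s]>[x | 'P].
have nHs : <[s]> \subset 'N(H).
  by rewrite sub_abelian_norm ?subsetIl ?cycle_abelian.
have sN : s \in 'N(H) by rewrite -cycle_subG.
have smH : (s ^+ m \in H) = ((s ^+ m) x == x).
  by rewrite !inE mem_cycle sub1set inE.
rewrite (porbitE s) card_orbit -card_quotient // /quotient morphim_cycle //.
rewrite -orderE order_dvdn -morphX // -smH.
by apply/eqP/idP => [/coset_idr|/coset_id]; apply; rewrite groupX.
Qed.

Lemma lcmn3_pairwise a b c :
  (forall m, a %| m -> b %| m -> c %| m)%N ->
  (forall m, a %| m -> c %| m -> b %| m)%N ->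
  (forall m, b %| m -> c %| m -> a %| m)%N ->
  [/\ lcmn a b = lcmn a (lcmn b c),
      lcmn a c = lcmn a (lcmn b c) &
      lcmn b c = lcmn a (lcmn b c)].
Proof.
move=> abc acb bca.
have dvd_c : (c %| lcmn a b)%N by rewrite abc ?dvdn_lcml ?dvdn_lcmr.
have dvd_b : (b %| lcmn a c)%N by rewrite acb ?dvdn_lcml ?dvdn_lcmr.
have dvd_a : (a %| lcmn b c)%N by rewrite bca ?dvdn_lcml ?dvdn_lcmr.
split; first by rewrite lcmnA (lcmn_idPl dvd_c).
  by rewrite lcmnCA (lcmn_idPr dvd_b).
by rewrite (lcmn_idPr dvd_a).
Qed.

Section Autoparatopism123.

Variables (n : nat) (L : 'I_n -> 'I_n -> 'I_n) (alpha beta gamma : {perm 'I_n}).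
Hypotheses (latinL : latin_square L) (autoL : autoparatopism123 L alpha beta gamma).

Lemma triplesP x y z : reflect (L x y = z) ((x, y, z) \in triples L).
Proof. by rewrite inE /= eq_sym; apply: eqP. Qed.

Lemma triples_row_inj x y y' z :
  (x, y, z) \in triples L -> (x, y', z) \in triples L -> y = y'.
Proof.
move=> /triplesP Lxy /triplesP Lxy'.
by have [y0 [_ uniq_y]] := latinL.1 x z; rewrite -(uniq_y _ Lxy) (uniq_y _ Lxy').
Qed.

Lemma triples_col_inj x x' y z :
  (x, y, z) \in triples L -> (x', y, z) \in triples L -> x = x'.
Proof.
move=> /triplesP Lxy /triplesP Lx'y.
by have [x0 [_ uniq_x]] := latinL.2 y z; rewrite -(uniq_x _ Lxy) (uniq_x _ Lx'y).
Qed.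

Lemma triples_fun x y z z' :
  (x, y, z) \in triples L -> (x, y, z') \in triples L -> z = z'.
Proof. by move=> /triplesP <- /triplesP. Qed.

Lemma triples_para123 x y z :
  (x, y, z) \in triples L -> (gamma z, alpha x, beta y) \in triples L.
Proof. by move=> txyz; rewrite -autoL; apply/imsetP; exists (x, y, z). Qed.

Lemma triples_expg i j k m : (i, j, k) \in triples L ->
  (((alpha * beta * gamma) ^+ m) i, ((beta * gamma * alpha) ^+ m) j,
   ((gamma * alpha * beta) ^+ m) k) \in triples L.
Proof.
move=> tijk; elim: m => [|m IHm]; first by rewrite !expg0 !perm1.
by rewrite !expgSr !permM; do 3!apply: triples_para123.
Qed.

Lemma cyc_len_dvdn_pairwise i j k m : (i, j, k) \in triples L ->
  let a := cyc_len (alpha * beta * gamma) i in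
  let b := cyc_len (beta * gamma * alpha) j in
  let c := cyc_len (gamma * alpha * beta) k in
  [/\ (a %| m -> b %| m -> c %| m)%N,
      (a %| m -> c %| m -> b %| m)%N &
      (b %| m -> c %| m -> a %| m)%N].
Proof.
move=> tijk; have := triples_expg m tijk; rewrite /cyc_len !card_porbit_dvdn.
split=> /eqP fix1 /eqP fix2; apply/eqP.
- by apply: triples_fun tijk; rewrite -fix1 -fix2.
- by apply: triples_row_inj tijk; rewrite -fix1 -fix2.
- by apply: triples_col_inj tijk; rewrite -fix1 -fix2.
Qed.

End Autoparatopism123.

Theorem lemma3p3 (n : nat) (L : 'I_n -> 'I_n -> 'I_n)
  (alpha beta gamma : {perm 'I_n}) (i j k : 'I_n) :
  latin_square L ->
  autoparatopism123 L alpha beta gamma ->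
  (i, j, k) \in triples L ->
  let a := cyc_len (alpha * beta * gamma) i in
  let b := cyc_len (beta * gamma * alpha) j in
  let c := cyc_len (gamma * alpha * beta) k in
  [/\ lcmn a b = lcmn a (lcmn b c),
      lcmn a c = lcmn a (lcmn b c) &
      lcmn b c = lcmn a (lcmn b c)].
Proof.
move=> latinL autoL tijk a b c.
by apply: lcmn3_pairwise => m; case: (cyc_len_dvdn_pairwise latinL autoL m tijk).
Qed.
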